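(* Let $p\ge1$ and let $d^{p}_{\mathrm{ERP}}$ be the ERP distance on finite sequences of vectors in $\mathbb{R}^d$. Then: (a) if $\bm A,\bm B$ are sequences of one-hot vectors (rows in $\{0,1\}^d$ with exactly one entry $1$) and $p=\infty$, then $d^{\infty}_{\mathrm{ERP}}(\bm A,\bm B)$ equals the Levenshtein (edit) distance between $\bm A$ and $\bm B$; (b) for all $\bm A\in\mathbb{R}^{m\times d}$, $\bm B\in\mathbb{R}^{n\times d}$: $d^p_{\mathrm{ERP}}(\bm A\oplus\bm0,\bm B)=d^p_{\mathrm{ERP}}(\bm0\oplus\bm A,\bm B)=d^p_{\mathrm{ERP}}(\bm A,\bm B)$, where $\bm0$ is a single zero row; (c) $d^p_{\mathrm{ERP}}(\bm A,\emptyset)=\sum_{i=1}^m\|\bm a_i\|_p$ for all $\bm A\in\mathbb{R}^{m\times d}$; (d) $d^p_{\mathrm{ERP}}(\bm A,\bm B)=d^p_{\mathrm{ERP}}(\bm B,\bm A)$ for all $\bm A,\bm B$; (e) for all $\bm A\in\mathbb{R}^{m\times d}$, $\bm B\in\mathbb{R}^{n\times d}$, $\bm C\in\mathbb{R}^{l\times d}$: $d^p_{\mathrm{ERP}}(\bm A,\bm B)\le d^p_{\mathrm{ERP}}(\bm A,\bm C)+d^p_{\mathrm{ERP}}(\bm C,\bm B)$; (f) $d^p_{\mathrm{ERP}}(\bm A,\bm A\oplus\bm0)=d^p_{\mathrm{ERP}}(\bm A,\bm A)=0$ for all $\bm A\in\mathbb{R}^{m\times d}$ (so $d^p_{\mathrm{ERP}}$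 is not a distance).
   Context: For $\bm A\in\mathbb{R}^{m\times d}$, $\bm B\in\mathbb{R}^{n\times d}$ (rows $\bm a_i,\bm b_i$), $\bm A\oplus\bm B$ is vertical concatenation, $\emptyset$ is the empty sequence, and $\bm A_{2:}$ removes the first row. The ERP distance is defined recursively: $d^p_{\mathrm{ERP}}(\bm A,\emptyset)=\sum_{i=1}^m\|\bm a_i\|_p$, $d^p_{\mathrm{ERP}}(\emptyset,\bm B)=\sum_{i=1}^n\|\bm b_i\|_p$, and otherwise $d^p_{\mathrm{ERP}}(\bm A,\bm B)=\min\{\|\bm a_1\|_p+d^p_{\mathrm{ERP}}(\bm A_{2:},\bm B),\ \|\bm b_1\|_p+d^p_{\mathrm{ERP}}(\bm A,\bm B_{2:}),\ \|\bm a_1-\bm b_1\|_p+d^p_{\mathrm{ERP}}(\bm A_{2:},\bm B_{2:})\}$. The Levenshtein distance is the minimum number of single-element insertions, deletions and substitutions transforming one sequence into the other. *)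

From HB Require Import structures.
From mathcomp Require Import all_boot all_order all_algebra.
From mathcomp Require Import all_classical all_reals all_analysis.
Set Implicit Arguments. Unset Strict Implicit. Unset Printing Implicit Defensive.
Import Order.TTheory GRing.Theory Num.Theory.
Local Open Scope ring_scope.

Section ERP.
Variables (R : realType) (d : nat).
Local Notation V := 'rV[R]_d.

(* The l_p norm on R^d, for p in [1, +oo] (p : \bar R; p = +oo gives the max norm).
   The value for p = -oo is irrelevant (always excluded by the hypothesis 1 <= p). *)
Definition pnorm (p : \bar R) (x : V) : R :=
  match p with
  | EFin q => (\sum_(i < d) `|x 0 i| `^ q) `^ q^-1
  | _ => \big[Num.max/0]_(i < d) `|x 0 i|
  end.

Fixpoint erp (p : \bar R) (A B : seq V) {struct A} : R :=
  match A with
  | [::] => \sum_(b <- B) pnorm p b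
  | a :: A' =>
      (fix erpA (B : seq V) : R :=
         match B with
         | [::] => \sum_(x <- A) pnorm p x
         | b :: B' =>
             Num.min (pnorm p a + erp p A' B)
               (Num.min (pnorm p b + erpA B')
                        (pnorm p (a - b) + erp p A' B'))
         end) B
  end.

Definition one_hot (x : V) : Prop :=
  (forall i, x 0 i = 0 \/ x 0 i = 1) /\ (exists! i, x 0 i = 1).

End ERP.

Section Lev.
Variable T : Type.

Definition edit1 (s t : seq T) : Prop :=
  (exists u v x, s = u ++ v /\ t = u ++ x :: v) \/
  (exists u v x, s = u ++ x :: v /\ t = u ++ v) \/
  (exists u v x y, s = u ++ x :: v /\ t = u ++ y :: v).

Inductive edits : nat -> seq T -> seq T -> Prop :=
  | edits0 s : edits 0 s s
  | editsS k s u t : edit1 s u -> edits k u t -> edits k.+1 s t.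

Definition is_levenshtein (s t : seq T) (n : nat) : Prop :=
  edits n s t /\ forall k, edits k s t -> (n <= k)%N.
End Lev.

(** ERP and the Levenshtein distance are two instances of one weighted edit
    distance, defined by the ERP recursion from a gap weight [w] and a
    substitution cost [c].  When [c], extended by [w] to the alphabet plus a
    gap symbol, satisfies the triangle inequality, an induction on the total
    length of three sequences shows that so does the edit distance.  For ERP,
    [w = |.|_p] and [c a b = |a - b|_p] qualify by Minkowski's inequality, and
    a zero row has weight 0, so it can be inserted or deleted for free.  On
    one-hot rows the sup norm gives [w = 1] and [c a b = (a != b)], which is
    the Levenshtein cost model. *)

From HB Require Import structures.
From mathcomp Require Import all_boot all_order all_algebra.
From mathcomp Require Import all_classical all_reals all_analysis.
From mathcomp Require Import zify.
Import Order.TTheory GRing.Theory Num.Theory.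
Set Implicit Arguments. Unset Strict Implicit. Unset Printing Implicit Defensive.
Local Open Scope ring_scope.

Section EditDistance.
Variables (R : realDomainType) (T : Type) (w : T -> R) (c : T -> T -> R).

Fixpoint edit_dist (A B : seq T) {struct A} : R :=
  match A with
  | [::] => \sum_(b <- B) w b
  | a :: A' =>
      (fix edit_distA (B : seq T) : R :=
         match B with
         | [::] => \sum_(x <- A) w x
         | b :: B' =>
             Num.min (w a + edit_dist A' B)
               (Num.min (w b + edit_distA B') (c a b + edit_dist A' B'))
         end) B
  end.

Lemma edit_dist_nil_l B : edit_dist [::] B = \sum_(b <- B) w b.
Proof. by []. Qed.

Lemma edit_dist_nil_r A : edit_dist A [::] = \sum_(a <- A) w a.
Proof. by case: A. Qed.

Lemma edit_dist_cons a A b B : edit_dist (a :: A) (b :: B) =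
  Num.min (w a + edit_dist A (b :: B))
    (Num.min (w b + edit_dist (a :: A) B) (c a b + edit_dist A B)).
Proof. by []. Qed.

Lemma edit_dist_del a A B : edit_dist (a :: A) B <= w a + edit_dist A B.
Proof.
case: B => [|b B]; first by rewrite !edit_dist_nil_r big_cons.
by rewrite edit_dist_cons ge_min lexx.
Qed.

Lemma edit_dist_ins A b B : edit_dist A (b :: B) <= w b + edit_dist A B.
Proof.
case: A => [|a A]; first by rewrite !edit_dist_nil_l big_cons.
by rewrite edit_dist_cons !ge_min lexx orbT.
Qed.

Lemma edit_dist_sub a A b B : edit_dist (a :: A) (b :: B) <= c a b + edit_dist A B.
Proof. by rewrite edit_dist_cons !ge_min lexx !orbT. Qed.

Variant edit_dist_spec (A B : seq T) : Prop :=
  | EditNil of A = [::] & B = [::]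
  | EditDel a A' of A = a :: A' & edit_dist A B = w a + edit_dist A' B
  | EditIns b B' of B = b :: B' & edit_dist A B = w b + edit_dist A B'
  | EditSub a A' b B' of A = a :: A' & B = b :: B' &
      edit_dist A B = c a b + edit_dist A' B'.

Lemma edit_distP A B : edit_dist_spec A B.
Proof.
case: A => [|a A]; case: B => [|b B].
- exact: EditNil.
- by apply: EditIns; rewrite // !edit_dist_nil_l big_cons.
- by apply: EditDel; rewrite // !edit_dist_nil_r big_cons.
have := edit_dist_cons a A b B.
case: leP => _; first exact: EditDel.
by case: leP => _; [exact: EditIns | exact: EditSub].
Qed.

Lemma edit_dist_sym : (forall a b, c a b = c b a) ->
  forall A B, edit_dist A B = edit_dist B A.
Proof.
move=> c_sym; elim=> [|a A IHA] B; first by rewrite edit_dist_nil_r.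
elim: B => [|b B IHB]; first by rewrite edit_dist_nil_r.
by rewrite !edit_dist_cons IHA IHB IHA c_sym minCA.
Qed.

Section Bounds.
Hypothesis w_ge0 : forall x, 0 <= w x.
Hypothesis c_ge0 : forall a b, 0 <= c a b.
Hypothesis c_xx : forall a, c a a = 0.

Lemma edit_dist_ge0 A B : 0 <= edit_dist A B.
Proof.
elim: A B => [|a A IHA] B; first by rewrite edit_dist_nil_l sumr_ge0.
elim: B => [|b B IHB]; first by rewrite edit_dist_nil_r sumr_ge0.
by rewrite edit_dist_cons !le_min !addr_ge0.
Qed.

Lemma edit_dist_catl u A B : edit_dist (u ++ A) (u ++ B) <= edit_dist A B.
Proof.
elim: u => [|x u IHu] //=.
by apply: le_trans (edit_dist_sub _ _ _ _) _; rewrite c_xx add0r.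
Qed.

Lemma edit_dist_xx A : edit_dist A A = 0.
Proof.
apply/le_anti; rewrite edit_dist_ge0 andbT.
by have := edit_dist_catl A [::] [::]; rewrite cats0 /= big_nil.
Qed.

Hypothesis w_le_wc : forall x b, w b <= w x + c x b.
Hypothesis w_le_cw : forall a x, w a <= c a x + w x.
Hypothesis c_triangle : forall a b x, c a b <= c a x + c x b.

Lemma edit_dist_triangle A B C :
  edit_dist A B <= edit_dist A C + edit_dist C B.
Proof.
have [n] := ubnP (size A + size B + size C).
elim: n A B C => // n IH A B C; rewrite ltnS.
case: (edit_distP A C) => [-> ->|a A' -> ->|x C' -> eAC|a A' x C' -> -> eAC] sz.
- by rewrite [X in _ <= X + _]/= big_nil add0r.
- apply: le_trans (edit_dist_del _ _ _) _; rewrite -addrA lerD2l.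
  by apply: IH; move: sz => /=; lia.
all: case: (edit_distP (x :: C') B) sz =>
  [//|y C'' [<- <-] eCB|b B' -> ->|y C'' b B' [<- <-] -> eCB] sz.
- apply: le_trans (IH A B C' _) _; first by move: sz => /=; lia.
  by rewrite eAC eCB addrACA lerDr addr_ge0.
- apply: le_trans (edit_dist_ins _ _ _) _; rewrite addrCA lerD2l.
  by apply: IH; move: sz => /=; lia.
- apply: le_trans (edit_dist_ins _ _ _) _; rewrite eAC eCB addrACA.
  by apply: lerD (w_le_wc _ _) (IH _ _ _ _); move: sz => /=; lia.
- apply: le_trans (edit_dist_del _ _ _) _; rewrite eAC eCB addrACA.
  by apply: lerD (w_le_cw _ _) (IH _ _ _ _); move: sz => /=; lia.
- apply: le_trans (edit_dist_ins _ _ _) _; rewrite addrCA lerD2l.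
  by apply: IH; move: sz => /=; lia.
- apply: le_trans (edit_dist_sub _ _ _ _) _; rewrite eAC eCB addrACA.
  by apply: lerD (c_triangle _ _ _) (IH _ _ _ _); move: sz => /=; lia.
Qed.

Lemma edit_dist_cons_null z A B : w z = 0 -> edit_dist (z :: A) B = edit_dist A B.
Proof.
move=> wz0; apply/le_anti/andP; split.
  by apply: le_trans (edit_dist_del _ _ _) _; rewrite wz0 add0r.
apply: le_trans (edit_dist_triangle _ _ (z :: A)) _; rewrite gerDr.
by apply: le_trans (edit_dist_ins _ _ _) _; rewrite wz0 edit_dist_xx addr0.
Qed.

Lemma edit_dist_rcons_null z A B : w z = 0 -> edit_dist (rcons A z) B = edit_dist A B.
Proof.
move=> wz0; have wz : edit_dist [:: z] [::] = 0 /\ edit_dist [::] [:: z] = 0.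
  by rewrite /= !big_cons !big_nil wz0 addr0.
apply/le_anti/andP; split.
  apply: le_trans (edit_dist_triangle _ _ A) _; rewrite gerDr.
  by have := edit_dist_catl A [:: z] [::]; rewrite cats0 cats1 wz.1.
apply: le_trans (edit_dist_triangle _ _ (rcons A z)) _; rewrite gerDr.
by have := edit_dist_catl A [::] [:: z]; rewrite cats0 cats1 wz.2.
Qed.
End Bounds.
End EditDistance.

Lemma eq_edit_dist_in (R : realDomainType) (T : eqType) (P : T -> Prop)
    (w w' : T -> R) (c c' : T -> T -> R) :
  (forall x, P x -> w x = w' x) -> (forall x y, P x -> P y -> c x y = c' x y) ->
  forall A B, (forall a, a \in A -> P a) -> (forall b, b \in B -> P b) ->
  edit_dist w c A B = edit_dist w' c' A B.
Proof.
move=> eq_w eq_c; elim=> [|a A IHA] B PA PB.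
  by rewrite !edit_dist_nil_l; apply: eq_big_seq => b /PB/eq_w.
elim: B PB => [|b B IHB] PB.
  by rewrite !edit_dist_nil_r; apply: eq_big_seq => x /PA/eq_w.
have PA' x : x \in A -> P x by move=> xA; apply: PA; rewrite in_cons xA orbT.
have PB' x : x \in B -> P x by move=> xB; apply: PB; rewrite in_cons xB orbT.
have [Pa Pb] : P a /\ P b by split; [apply: PA | apply: PB]; rewrite mem_head.
by rewrite !edit_dist_cons IHA // IHA // IHB // eq_w // eq_w // eq_c.
Qed.

Section Edits.
Variable T : Type.

Lemma edit1_cons (x : T) s t : edit1 s t -> edit1 (x :: s) (x :: t).
Proof.
case=> [[u [v [y [-> ->]]]]|[[u [v [y [-> ->]]]]|[u [v [y [z [-> ->]]]]]]].
- by left; exists (x :: u), v, y.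
- by right; left; exists (x :: u), v, y.
- by right; right; exists (x :: u), v, y, z.
Qed.

Lemma edits_cons k (x : T) s t : edits k s t -> edits k (x :: s) (x :: t).
Proof.
elim=> [s'|k' s' u t' e1 _ IH]; first exact: edits0.
exact: editsS (edit1_cons x e1) IH.
Qed.
End Edits.

Section Levenshtein.
Variables (R : realDomainType) (T : eqType).

Definition lev_gap (x : T) : R := 1.
Definition lev_cost (a b : T) : R := (a != b)%:R.
Local Notation lev_dist := (edit_dist lev_gap lev_cost).

Lemma lev_cost_xx a : lev_cost a a = 0.
Proof. by rewrite /lev_cost eqxx. Qed.

Lemma lev_cost_le1 a b : lev_cost a b <= 1.
Proof. by rewrite /lev_cost; case: (a != b); rewrite ?ler01. Qed.

Lemma lev_cost_triangle a b x : lev_cost a b <= lev_cost a x + lev_cost x b.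
Proof.
have [->|ax] := eqVneq a x; first by rewrite lev_cost_xx add0r.
by apply: le_trans (lev_cost_le1 a b) _; rewrite /lev_cost ax lerDl ler0n.
Qed.

Lemma lev_dist_triangle s t u : lev_dist s t <= lev_dist s u + lev_dist u t.
Proof.
apply: edit_dist_triangle => [x|x b|a x|a b x]; rewrite /lev_gap ?ler01 //.
- by rewrite lerDl ler0n.
- by rewrite lerDr ler0n.
- exact: lev_cost_triangle.
Qed.

Lemma lev_dist_xx s : lev_dist s s = 0.
Proof. by apply: edit_dist_xx => *; rewrite ?ler01 ?ler0n ?lev_cost_xx. Qed.

Lemma lev_dist_edit1 s t : edit1 s t -> lev_dist s t <= 1.
Proof.
case=> [[u [v [x [-> ->]]]]|[[u [v [x [-> ->]]]]|[u [v [x [y [-> ->]]]]]]];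
  apply: le_trans (edit_dist_catl _ lev_cost_xx u _ _) _.
- by apply: le_trans (edit_dist_ins _ _ _ _ _) _; rewrite lev_dist_xx addr0.
- by apply: le_trans (edit_dist_del _ _ _ _ _) _; rewrite lev_dist_xx addr0.
- apply: le_trans (edit_dist_sub _ _ _ _ _ _) _.
  by rewrite lev_dist_xx addr0 lev_cost_le1.
Qed.

Lemma lev_dist_le_edits k s t : edits k s t -> lev_dist s t <= k%:R.
Proof.
elim=> [s'|k' s' u t' /lev_dist_edit1 e1 _ IH]; first by rewrite lev_dist_xx.
apply: le_trans (lev_dist_triangle s' t' u) _.
by rewrite -natr1 addrC lerD.
Qed.

Lemma lev_dist_edits s t : exists2 n, lev_dist s t = n%:R & edits n s t.
Proof.
have [n] := ubnP (size s + size t); elim: n s t => // n IH s t; rewrite ltnS.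
case: (edit_distP lev_gap lev_cost s t) =>
  [-> ->|a s' -> ->|b t' -> ->|a s' b t' -> -> ->] sz.
- by exists 0%N; [rewrite lev_dist_xx | exact: edits0].
- have [m -> ed] := IH s' t (ltac:(move: sz => /=; lia)).
  exists m.+1; first by rewrite /lev_gap -natr1 addrC.
  by apply: editsS ed; right; left; exists [::], s', a.
- have [m -> ed] := IH s t' (ltac:(move: sz => /=; lia)).
  exists m.+1; first by rewrite /lev_gap -natr1 addrC.
  by apply: (@editsS _ _ _ (b :: s)); [left; exists [::], s, b | exact: edits_cons].
- have [m -> ed] := IH s' t' (ltac:(move: sz => /=; lia)).
  have [<-|ab] := eqVneq a b.
    by exists m; [rewrite lev_cost_xx add0r | exact: edits_cons].
  exists m.+1; first by rewrite /lev_cost ab -natr1 addrC.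
  apply: (@editsS _ _ _ (b :: s')); last exact: edits_cons.
  by right; right; exists [::], s', a, b.
Qed.

Lemma lev_dist_levenshtein s t :
  exists n : nat, is_levenshtein s t n /\ lev_dist s t = n%:R.
Proof.
have [n ed_n e_n] := lev_dist_edits s t.
exists n; split=> //; split=> // k /lev_dist_le_edits.
by rewrite ed_n ler_nat.
Qed.
End Levenshtein.

Arguments lev_gap {R T} x.
Arguments lev_cost {R T} a b.

Section Minkowski.
Variables (R : realType) (d : nat).

(* Minkowski's inequality for finite sums is the one for the counting measure
   on [nat], applied to functions vanishing from [d] on. *)
Definition extend0 (f : 'I_d -> R) (k : nat) : R := oapp f 0 (insub k).

Lemma Lnorm_counting_extend0 (q : R) (f : 'I_d -> R) : 0 < q ->
  ('N[@counting nat R]_q%:E [EFin \o extend0 f] =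
    ((\sum_i `|f i| `^ q) `^ q^-1)%:E)%E.
Proof.
move=> q_gt0; rewrite Lnorm_counting // (@nneseries_split _ _ 0 d) ?add0n; last first.
  by move=> k _; rewrite poweR_ge0.
rewrite eseries0 ?adde0; last first.
  by move=> k dk _ /=; rewrite /extend0 insubF ?ltnNge ?dk //= normr0 powR0 ?gt_eqF.
rewrite big_mkord (eq_bigr (fun i : 'I_d => (`|f i| `^ q)%:E)); last first.
  by move=> i _; rewrite /= /extend0 valK.
by rewrite -poweR_EFin -sumEFin.
Qed.

Lemma minkowski_sum (q : R) (f g : 'I_d -> R) : 1 <= q ->
  (\sum_i `|f i + g i| `^ q) `^ q^-1 <=
  (\sum_i `|f i| `^ q) `^ q^-1 + (\sum_i `|g i| `^ q) `^ q^-1.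
Proof.
move=> q_ge1; have q_gt0 : 0 < q by rewrite (lt_le_trans _ q_ge1).
have mext h : measurable_fun [set: nat] (extend0 h) by [].
have := eminkowski (@counting nat R) (mext f) (mext g) (p := q%:E) q_ge1.
have -> : (extend0 f \+ extend0 g)%R = extend0 (fun i => f i + g i).
  by apply/funext => k; rewrite /extend0 /=; case: insub => //=; rewrite addr0.
by rewrite !Lnorm_counting_extend0 // -EFinD lee_fin.
Qed.
End Minkowski.

Section PNorm.
Variables (R : realType) (d : nat) (p : \bar R).
Hypothesis p_ge1 : (1 <= p)%E.
Implicit Types x y : 'rV[R]_d.

Lemma pnorm_ge0 x : 0 <= pnorm p x.
Proof. by case: p => [q||] /=; rewrite ?powR_ge0 ?bigmax_ge_id. Qed.

Lemma pnormN x : pnorm p (- x) = pnorm p x.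
Proof.
by case: p => [q||] /=; [congr (_ `^ _)|..]; apply: eq_bigr => i _; rewrite mxE normrN.
Qed.

Lemma pnorm0 : pnorm p (0 : 'rV[R]_d) = 0.
Proof.
move: p_ge1; case: p => [q||] //= => [|_]; first rewrite lee_fin => q_ge1.
  have q_neq0 : q != 0 by rewrite gt_eqF // (lt_le_trans _ q_ge1).
  by rewrite big1 ?powR0 ?invr_neq0 // => i _; rewrite mxE normr0 powR0.
by apply: bigmax_eq_id => i _; rewrite mxE normr0.
Qed.

Lemma pnormD x y : pnorm p (x + y) <= pnorm p x + pnorm p y.
Proof.
move: p_ge1; case: p => [q||] //= => [|_]; first rewrite lee_fin => q_ge1.
  have := minkowski_sum (fun i => x 0 i) (fun i => y 0 i) q_ge1.
  by under eq_bigr => i _ do rewrite mxE.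
apply: bigmax_le => [|i _]; first by rewrite addr_ge0 ?bigmax_ge_id.
rewrite mxE; apply: le_trans (ler_normD _ _) _.
by apply: lerD; apply: (le_bigmax _ (fun i => `|_ 0 i|)).
Qed.

Lemma pnorm_le_addB x y : pnorm p y <= pnorm p x + pnorm p (x - y).
Proof. by have := pnormD x (y - x); rewrite addrC subrK -opprB pnormN. Qed.

Lemma pnorm_le_Badd x y : pnorm p x <= pnorm p (x - y) + pnorm p y.
Proof. by have := pnormD (x - y) y; rewrite subrK. Qed.

Lemma pnormB_triangle x y z : pnorm p (x - y) <= pnorm p (x - z) + pnorm p (z - y).
Proof. by have := pnormD (x - z) (z - y); rewrite addrA subrK. Qed.

Lemma erp_edit_dist (A B : seq 'rV[R]_d) :
  erp p A B = edit_dist (pnorm p) (fun a b => pnorm p (a - b)) A B.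
Proof.
elim: A B => [|a A IHA] B //; elim: B => [|b B IHB] //.
by rewrite edit_dist_cons -IHB -!IHA.
Qed.
End PNorm.

Section ERP.
Variables (R : realType) (d : nat) (p : \bar R).
Hypothesis p_ge1 : (1 <= p)%E.
Implicit Types (x y z : 'rV[R]_d) (A B C : seq 'rV[R]_d).

Let w_ge0 x : 0 <= pnorm p x := pnorm_ge0 p x.
Let c_ge0 x y : 0 <= pnorm p (x - y) := pnorm_ge0 p (x - y).
Let c_xx x : pnorm p (x - x) = 0. Proof. by rewrite subrr pnorm0. Qed.
Let w_le_wc := @pnorm_le_addB R d p p_ge1.
Let w_le_cw := @pnorm_le_Badd R d p p_ge1.
Let c_triangle := @pnormB_triangle R d p p_ge1.

Lemma erp_nil_r A : erp p A [::] = \sum_(a <- A) pnorm p a.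
Proof. by case: A. Qed.

Lemma erp_sym A B : erp p A B = erp p B A.
Proof.
by rewrite !erp_edit_dist; apply: edit_dist_sym => x y; rewrite -opprB pnormN.
Qed.

Lemma erp_xx A : erp p A A = 0.
Proof. by rewrite erp_edit_dist (edit_dist_xx w_ge0 c_ge0 c_xx). Qed.

Lemma erp_triangle A B C : erp p A B <= erp p A C + erp p C B.
Proof.
by rewrite !erp_edit_dist (edit_dist_triangle w_ge0 w_le_wc w_le_cw c_triangle).
Qed.

Lemma erp_cons0 A B : erp p (0 :: A) B = erp p A B.
Proof.
rewrite !erp_edit_dist.
by rewrite (edit_dist_cons_null w_ge0 c_ge0 c_xx w_le_wc w_le_cw c_triangle) ?pnorm0.
Qed.

Lemma erp_rcons0 A B : erp p (rcons A 0) B = erp p A B.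
Proof.
rewrite !erp_edit_dist.
by rewrite (edit_dist_rcons_null w_ge0 c_xx w_le_wc w_le_cw c_triangle) ?pnorm0.
Qed.
End ERP.

Section OneHot.
Variables (R : realType) (d : nat).
Implicit Types x a b : 'rV[R]_d.

Lemma pnormy_01 x : (forall i, `|x 0 i| = 0 \/ `|x 0 i| = 1) ->
  pnorm +oo x = (x != 0)%:R.
Proof.
move=> x01; have [->|nz] := eqVneq x 0; first by rewrite pnorm0 // leey.
have /existsP[j xj] : [exists j, x 0 j != 0].
  rewrite -negb_forall; apply: contra nz => /forallP x0.
  by apply/eqP/rowP => j; rewrite mxE; apply/eqP.
apply/le_anti/andP; split.
  apply: bigmax_le => [|i _]; first exact: ler01.
  by case: (x01 i) => ->; rewrite ?ler01.
apply: le_trans (le_bigmax _ (fun i => `|x 0 i|) j).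
by case: (x01 j) => [/eqP|-> //=]; rewrite normr_eq0 (negPf xj).
Qed.

Lemma one_hot_pnormy a : one_hot a -> pnorm +oo a = 1.
Proof.
move=> [a01 [i [ai1 _]]]; rewrite pnormy_01.
  by have -> : a != 0 by apply: contra_eq_neq ai1 => ->; rewrite mxE eq_sym oner_neq0.
by move=> j; case: (a01 j) => ->; rewrite ?normr0 ?normr1; [left | right].
Qed.

Lemma one_hot_pnormyB a b : one_hot a -> one_hot b -> pnorm +oo (a - b) = lev_cost a b.
Proof.
move=> [a01 _] [b01 _]; rewrite pnormy_01 ?subr_eq0 // => i; rewrite !mxE.
case: (a01 i) (b01 i) => -> [] ->;
  rewrite ?subrr ?sub0r ?subr0 ?normrN ?normr0 ?normr1 //; by [left | right].
Qed.

Lemma erp_one_hot (A B : seq 'rV[R]_d) :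
  (forall a, a \in A -> one_hot a) -> (forall b, b \in B -> one_hot b) ->
  erp +oo A B = edit_dist lev_gap lev_cost A B.
Proof.
rewrite erp_edit_dist; apply: (eq_edit_dist_in (P := @one_hot R d)).
  exact: one_hot_pnormy.
exact: one_hot_pnormyB.
Qed.
End OneHot.

Theorem lemma1 (R : realType) (d : nat) (p : \bar R) (hp : (1 <= p)%E) :
  (* (a) p = +oo, one-hot sequences: ERP = Levenshtein distance *)
  (forall A B : seq 'rV[R]_d,
      (forall a, a \in A -> one_hot a) -> (forall b, b \in B -> one_hot b) ->
      exists n : nat, is_levenshtein A B n /\ erp +oo%E A B = n%:R) /\
  (* (b) appending / prepending a zero row *)
  (forall A B : seq 'rV[R]_d,
      erp p (rcons A 0) B = erp p A B /\ erp p (0 :: A) B = erp p A B) /\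
  (* (c) *)
  (forall A : seq 'rV[R]_d, erp p A [::] = \sum_(a <- A) pnorm p a) /\
  (* (d) symmetry *)
  (forall A B : seq 'rV[R]_d, erp p A B = erp p B A) /\
  (* (e) triangle inequality *)
  (forall A B C : seq 'rV[R]_d, erp p A B <= erp p A C + erp p C B) /\
  (* (f) *)
  (forall A : seq 'rV[R]_d, erp p A (rcons A 0) = erp p A A /\ erp p A A = 0).
Proof.
split.
  by move=> A B oneA oneB; rewrite erp_one_hot //; exact: lev_dist_levenshtein.
split; first by move=> A B; rewrite erp_rcons0 // erp_cons0.
split; first exact: erp_nil_r.
split; first exact: erp_sym.
split; first exact: erp_triangle.
by move=> A; rewrite erp_sym erp_rcons0 // erp_xx.
Qed.
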